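(* Let $p$ be a prime, $k$ a commutative $\mathbb{Z}_{(p)}$-algebra, $n\in\mathbb{N}$, and $(a,I)\in\mathcal P$ with $a$ taking values in $\mathbb{N}$. Let $P$ be the set of partitions of $a$ (subsets of $\mathrm{Supp}(a)$) of size $\#I$. Then there exists a function $s\colon P\to\mathbb{Z}$ such that in $W\Omega_{k[X_1,\ldots,X_n]/k}$ $$h(a,I)=\sum_{J\in P}e(s(J),a,J),$$ where $s(J)$ is viewed in $W(k)$ via $\mathbb{Z}\to W(k)$.
   Context: $W\Omega_{k[\underline X]/k}$ is the (Langer–Zink) de Rham–Witt complex of $k[X_1,\ldots,X_n]$ over $k$ with differential $d$, Frobenius $F$, Teichmüller map $[\cdot]$. A weight function is a map $a\colon\{1,\ldots,n\}\to\mathbb{N}[1/p]$; $\mathrm{Supp}(a)=\{i:a_i\neq0\}$; $a|_K$ equals $a$ on $K$ and $0$ elsewhere; $\mathrm{val}_p$ is the $p$-adic valuation, $\mathrm{val}_p(a)=\min_{i\in\mathrm{Supp}(a)}\mathrm{val}_p(a_i)$. A partition of $a$ is a subset of $\mathrm{Supp}(a)$, its size is its cardinality; $\mathcal P$ is the set of pairs $(a,I)$. Order $\mathrm{Supp}(a)$ by $i\preceq i'$ iff $\mathrm{val}_p(a_i)<\mathrm{val}_p(a_{i'})$, or equality and $i\leqslant i'$. For $J=\{j_1\prec\cdots\prec j_m\}$: $J_0=\{i: i\prec j_1\}$ ($=\mathrm{Supp}(a)$ if $m=0$), $J_l=\{i: j_l\preceq i\prec j_{l+1}\}$ ($1\leqslant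 l<m$), $J_m=\{i: j_m\preceq i\}$. For $\mathbb{N}$-valued nonzero $c$, $g(c)=F^{\mathrm{val}_p(c)}\big(d([\underline X^{p^{-\mathrm{val}_p(c)}c}])\big)$, $\underline X^c=\prod X_i^{c_i}$. For $\mathbb{N}$-valued $a$ and $\eta\in W(k)$: $e(\eta,a,J)=\eta\,[\underline X^{a|_{J_0}}]\prod_{l=1}^m g(a|_{J_l})$ (product in increasing $l$). Also $h(a,I)=\prod_{i\in\mathrm{Supp}(a)\smallsetminus I}[X_i]^{a_i}\prod_{j\in I}F^{\mathrm{val}_p(a_j)}\big(d([X_j]^{p^{-\mathrm{val}_p(a_j)}a_j})\big)$, the second product taken in a fixed order (e.g. increasing $j$). *)

(* Abstract axiomatization of the part of the de Rham-Witt
   complex W Omega_{k[X_1..X_n]/k} needed by the statement. *)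
From HB Require Import structures.
From mathcomp Require Import all_boot all_order all_algebra.
Set Implicit Arguments. Unset Strict Implicit. Unset Printing Implicit Defensive.
Import Order.TTheory GRing.Theory Num.Theory.
Local Open Scope ring_scope.

Section DRW.
Variables (p n : nat) (A : pzRingType).
(* t i = [X_i] (Teichmueller of the variable X_i) *)
Variables (t : 'I_n -> A) (d : A -> A) (F : A -> A).

(* Identities satisfied by [.], d, F in W Omega_{k[X]/k} (graded commutative,
   [X_i] of degree 0, d a derivation, F a ring endomorphism). *)
Record dRW_axioms : Prop := {
  dRW_d_add : {morph d : x y / x + y};
  dRW_F_rmorph : {morph F : x y / x * y} /\ {morph F : x y / x + y} /\ F 1 = 1;
  dRW_t_central : forall i x, t i * x = x * t i;
  dRW_d1 : d 1 = 0;
  dRW_d_leibniz_t : forall i x, d (t i * x) = d (t i) * x + t i * d x;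
  dRW_dt_anticomm : forall i j, d (t i) * d (t j) = - (d (t j) * d (t i));
  dRW_dt_sq : forall i, d (t i) * d (t i) = 0;
  dRW_F_t : forall i, F (t i) = t i ^+ p;
  dRW_F_dt : forall i, F (d (t i)) = t i ^+ p.-1 * d (t i)
}.

Definition teichX (c : 'I_n -> nat) : A := \prod_(i < n) t i ^+ c i.

Definition supp (a : 'I_n -> nat) : {set 'I_n} := [set i | a i != 0%N].

Definition restrict (a : 'I_n -> nat) (K : {set 'I_n}) : 'I_n -> nat :=
  fun i => if i \in K then a i else 0%N.

(* val_p(a) = min_{i in Supp a} val_p(a_i) (arbitrary if Supp a is empty) *)
Definition valw (a : 'I_n -> nat) : nat :=
  \big[minn/ \max_(i in supp a) logn p (a i)]_(i in supp a) logn p (a i).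

Definition preceq (a : 'I_n -> nat) (i i' : 'I_n) : bool :=
  (logn p (a i) < logn p (a i'))%N ||
  ((logn p (a i) == logn p (a i')) && (i <= i')%N).
Definition prec (a : 'I_n -> nat) (i i' : 'I_n) : bool :=
  (logn p (a i) < logn p (a i'))%N ||
  ((logn p (a i) == logn p (a i')) && (i < i')%N).

Definition block0 (a : 'I_n -> nat) (J : {set 'I_n}) : {set 'I_n} :=
  [set i in supp a | [forall j in J, prec a i j]].

(* J_l for j = j_l: {i in Supp a : j_l \preceq i \prec j_{l+1}}
   (no upper bound when j = j_m) *)
Definition block (a : 'I_n -> nat) (J : {set 'I_n}) (j : 'I_n) : {set 'I_n} :=
  [set i in supp a | preceq a j i &&
     [forall j' in J, prec a j j' ==> prec a i j']].

Definition sortedJ (a : 'I_n -> nat) (J : {set 'I_n}) : seq 'I_n :=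
  sort (preceq a) (enum J).

Definition gfun (c : 'I_n -> nat) : A :=
  iter (valw c) F (d (teichX (fun i => c i %/ p ^ valw c)%N)).

Definition efun (s : int) (a : 'I_n -> nat) (J : {set 'I_n}) : A :=
  s%:~R * teichX (restrict a (block0 a J)) *
  \prod_(j <- sortedJ a J) gfun (restrict a (block a J j)).

Definition hfun (a : 'I_n -> nat) (I : {set 'I_n}) : A :=
  (\prod_(i in supp a :\: I) t i ^+ a i) *
  \prod_(j <- enum I)
     iter (logn p (a j)) F (d (t j ^+ (a j %/ p ^ logn p (a j))%N)).

Definition partsOfSize (a : 'I_n -> nat) (m : nat) : {set {set 'I_n}} :=
  [set J : {set 'I_n} | (J \subset supp a) && (#|J| == m)].

End DRW.

From Pilot Require Import Defs.
From HB Require Import structures.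
From mathcomp Require Import all_boot all_order all_algebra.
From mathcomp Require Import zify.
Import Order.TTheory GRing.Theory Num.Theory.
Local Open Scope ring_scope.
Set Implicit Arguments. Unset Strict Implicit. Unset Printing Implicit Defensive.

(* For a duplicate-free sequence L of indices put
     omega L = (prod_(i in L) a_i / p^(val_p a_i)) [X^(a - 1_L)] prod_(i in L) d[X_i].
   The identities F^v[X_i] = [X_i]^(p^v), F^v d[X_i] = [X_i]^(p^v - 1) d[X_i] and the
   Leibniz rule give h(a,I) = omega I, and they expand e(1,a,J) as a sum over the choices L
   of one index from each block J_l of the terms omega L times a power of p; the choice
   L = J occurs with coefficient 1.  Every other choice replaces some j_l by a strictly
   ⪯-larger index of its block, so it increases the sum of the ranks of the indices for ⪯.
   As the d[X_i] anticommute, omega L is, up to sign, omega of its underlying set sorted;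
   descending induction on the rank sum therefore writes every omega L, and in particular
   h(a,I), as an integral combination of the e(1,a,J) with #J = #L. *)

Section AnticommutingProducts.
Variables (R : pzRingType) (I : eqType) (x : I -> R).
Hypothesis x_anticomm : forall i j, x i * x j = - (x j * x i).

Lemma mulr_prod_anticomm i s :
  x i * \prod_(j <- s) x j = (-1) ^+ size s * (\prod_(j <- s) x j * x i).
Proof.
elim: s => [|j s IHs]; first by rewrite big_nil expr0 mul1r mulr1 mul1r.
rewrite big_cons mulrA x_anticomm mulNr -mulrA IHs mulrA (commr_sign (x j)).
by rewrite exprS mulN1r !mulNr !mulrA.
Qed.

Lemma prod_anticomm_perm s s' : perm_eq s s' ->
  exists k : nat, \prod_(i <- s) x i = (-1) ^+ k * \prod_(i <- s') x i.
Proof.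
elim: s s' => [|i s IHs] s' eq_ss'.
  by exists 0%N; move: eq_ss'; rewrite perm_sym => /perm_nilP ->; rewrite mul1r.
have i_s' : i \in s' by rewrite -(perm_mem eq_ss') mem_head.
case/splitPr: i_s' eq_ss' => s1 s2.
rewrite perm_sym -[i :: s2]cat1s perm_catCA /= perm_cons perm_sym.
move=> /IHs [k eq_s]; exists (k + size s1)%N.
rewrite big_cons eq_s (mulrA (x i)) (commr_sign (x i)) -mulrA !big_cat big_cons.
by rewrite [x i * (_ * _)]mulrA mulr_prod_anticomm exprD -!mulrA.
Qed.

End AnticommutingProducts.

Section Choices.
Variables (T U : eqType) (X : T -> seq U).

Definition choices (s : seq T) : seq (seq U) :=
  foldr (fun j cs => [seq i :: L | i <- X j, L <- cs]) [:: [::]] s.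

Lemma mem_choices s L : (L \in choices s) = all2 (fun j i => i \in X j) s L.
Proof.
elim: s L => [|j s IHs] L /=; first by rewrite mem_seq1; case: L.
apply/allpairsPdep/idP => [[i [L' [iXj L'cs ->]]] | ].
  by rewrite /= iXj -IHs.
by case: L => // i L /andP [iXj sL]; exists i, L; rewrite IHs.
Qed.

Lemma choices_uniq s : (forall j, uniq (X j)) -> uniq (choices s).
Proof.
move=> uX; elim: s => [|j s IHs] //=.
by apply: allpairs_uniq => // -[i L] [i' L'] _ _ [-> ->].
Qed.

Lemma prod_sum_choices (R : pzSemiRingType) (f : T -> U -> R) s :
  \prod_(j <- s) \sum_(i <- X j) f j i =
  \sum_(L <- choices s) \prod_(x <- zip s L) f x.1 x.2.
Proof.
elim: s => [|j s IHs] /=; first by rewrite big_nil big_seq1 big_nil.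
rewrite big_cons IHs mulr_suml big_allpairs_dep; apply: eq_bigr => i _.
by rewrite mulr_sumr; apply: eq_bigr => L _; rewrite big_cons.
Qed.

End Choices.

Lemma self_mem_choices (T : eqType) (X : T -> seq T) s :
  (forall j, j \in s -> j \in X j) -> s \in choices X s.
Proof.
rewrite mem_choices; elim: s => //= j s IHs s_X.
by rewrite s_X ?mem_head // IHs // => k ks; rewrite s_X // in_cons ks orbT.
Qed.

Lemma all2_memr (T U : eqType) (R : T -> U -> bool) s L i :
  all2 R s L -> i \in L -> exists2 j, j \in s & R j i.
Proof.
elim: s L => [|j s IHs] [|i' L] //= /andP [Rji' RsL]; rewrite in_cons => /predU1P [->|iL].
  by exists j; rewrite ?mem_head.
by have [j' j's Rj'i] := IHs _ RsL iL; exists j'; rewrite // in_cons j's orbT.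
Qed.

Lemma all2_uniq (T U : eqType) (R : T -> U -> bool) s L :
  (forall j j' i, j \in s -> j' \in s -> R j i -> R j' i -> j = j') ->
  uniq s -> all2 R s L -> uniq L.
Proof.
elim: s L => [|j s IHs] [|i L] //= R_inj /andP [j_s uniq_s] /andP [Rji RsL].
rewrite (IHs L) // => [|j1 j2 i' j1s j2s]; last by apply: R_inj; rewrite in_cons ?j1s ?j2s orbT.
rewrite andbT; apply/negP => /(all2_memr RsL) [j' j's Rj'i].
by move: j_s; rewrite (R_inj j j' i) ?mem_head ?in_cons ?j's ?orbT.
Qed.

Lemma sub_all2 (T U : Type) (R R' : T -> U -> bool) s L :
  (forall x y, R x y -> R' x y) -> all2 R s L -> all2 R' s L.
Proof.
move=> RR'; elim: s L => [|x s IHs] [|y L] //= /andP [Rxy RsL].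
by rewrite RR' // IHs.
Qed.

Lemma leq_sum_all2 (T : Type) (f : T -> nat) s L :
  all2 (fun x y => f x <= f y)%N s L -> (\sum_(x <- s) f x <= \sum_(y <- L) f y)%N.
Proof.
elim: s L => [|x s IHs] [|y L] //= /andP [le_xy /IHs le_sL].
by rewrite !big_cons leq_add.
Qed.

Lemma ltn_sum_all2 (T : eqType) (f : T -> nat) s L : injective f ->
  all2 (fun x y => f x <= f y)%N s L -> s != L ->
  (\sum_(x <- s) f x < \sum_(y <- L) f y)%N.
Proof.
move=> f_inj; elim: s L => [|x s IHs] [|y L] //= /andP [le_xy le_sL].
rewrite !big_cons eqseq_cons; have [<- /= ne_sL | ne_xy _] := eqVneq x y.
  by rewrite ltn_add2l IHs.
rewrite -addSn leq_add ?leq_sum_all2 // ltn_neqAle le_xy andbT.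
by rewrite (inj_eq f_inj).
Qed.

Lemma sum_le_size_max (T : Type) (f : T -> nat) (m : nat) s :
  (forall x, f x <= m)%N -> (\sum_(x <- s) f x <= size s * m)%N.
Proof.
move=> le_fm; elim: s => [|x s IHs]; first by rewrite big_nil.
by rewrite big_cons mulSn leq_add.
Qed.

Lemma predn_mul (m q : nat) :
  (0 < m)%N -> (0 < q)%N -> (m * q).-1 = (m.-1 * q + q.-1)%N.
Proof. by case: m => // m; case: q => // q _ _; rewrite mulSn /=; lia. Qed.

Lemma big_zip_fst {T U R : Type} {idx : R} {op : R -> R -> R}
    (s : seq T) (L : seq U) (f : T -> R) : (size s <= size L)%N ->
  \big[op/idx]_(x <- zip s L) f x.1 = \big[op/idx]_(j <- s) f j.
Proof. by move=> le_sL; rewrite -[in RHS](unzip1_zip le_sL) big_map. Qed.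

Lemma big_zip_snd {T U R : Type} {idx : R} {op : R -> R -> R}
    (s : seq T) (L : seq U) (f : U -> R) : (size L <= size s)%N ->
  \big[op/idx]_(x <- zip s L) f x.2 = \big[op/idx]_(i <- L) f i.
Proof. by move=> le_Ls; rewrite -[in RHS](unzip2_zip le_Ls) big_map. Qed.

Lemma divn_plogn (p m v : nat) : (0 < p)%N -> (v <= logn p m)%N ->
  (m %/ p ^ v = m %/ p ^ logn p m * p ^ (logn p m - v))%N.
Proof.
move=> p_gt0; set l := logn p m => le_v.
have {1}-> : m = (m %/ p ^ l * p ^ (l - v) * p ^ v)%N.
  by rewrite -mulnA -expnD subnK // divnK // pfactor_dvdnn.
by rewrite mulnK // expn_gt0 p_gt0.
Qed.

(** * The order ⪯ and the blocks J_l *)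

Lemma valw_eq (p n : nat) (c : 'I_n -> nat) j : j \in supp c ->
  (forall i, i \in supp c -> logn p (c j) <= logn p (c i))%N ->
  valw p c = logn p (c j).
Proof.
move=> jc min_j; rewrite /valw -minEnat; apply/eqP; rewrite eqn_leq -!leEnat.
rewrite bigmin_le_cond //=; apply: le_bigmin => [|i /min_j]; rewrite leEnat //.
exact: (@leq_bigmax_cond _ (mem (supp c)) (fun i => logn p (c i))).
Qed.

Lemma supp_restrict (n : nat) (a : 'I_n -> nat) (K : {set 'I_n}) :
  K \subset supp a -> supp (restrict a K) = K.
Proof.
move=> K_supp; apply/setP => i; rewrite [LHS]inE /restrict.
by case: ifP => [/(subsetP K_supp)|]; rewrite ?inE ?eqxx.
Qed.

Section WeightOrder.
Variables (p n : nat) (a : 'I_n -> nat).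

Definition key (i : 'I_n) : nat := logn p (a i) * n + i.

Lemma key_inj : injective key.
Proof.
move=> i j /(congr1 (modn^~ n)); rewrite !modnMDl !modn_small //.
by move/val_inj.
Qed.

Lemma logn_le_key i j : (key i <= key j)%N -> (logn p (a i) <= logn p (a j))%N.
Proof.
rewrite /key => le_ij; move: (ltn_ord i) (ltn_ord j) => lt_in lt_jn.
rewrite leqNgt; apply/negP => lt_ji; nia.
Qed.

Lemma preceqE i j : preceq p a i j = (key i <= key j)%N.
Proof.
rewrite /preceq /key; move: (ltn_ord i) (ltn_ord j) => lt_in lt_jn.
case: (ltngtP (logn p (a i)) (logn p (a j))) => [lt_ij|lt_ji|->] /=.
- by apply/esym/idP; nia.
- by apply/esym/negP; nia.
- by rewrite leq_add2l.
Qed.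

Lemma precE i j : prec p a i j = (key i < key j)%N.
Proof.
rewrite /prec /key; move: (ltn_ord i) (ltn_ord j) => lt_in lt_jn.
case: (ltngtP (logn p (a i)) (logn p (a j))) => [lt_ij|lt_ji|->] /=.
- by apply/esym/idP; nia.
- by apply/esym/negP; nia.
- by rewrite ltn_add2l.
Qed.

Definition key_weight (L : seq 'I_n) : nat := (\sum_(i <- L) key i)%N.

Lemma key_weight_le L : (key_weight L <= size L * \max_(i : 'I_n) key i)%N.
Proof. by apply: sum_le_size_max => i; apply: leq_bigmax. Qed.

Section Blocks.
Variable J : {set 'I_n}.
Hypothesis J_supp : J \subset supp a.

Local Notation block := (block p a J).
Local Notation block0 := (block0 p a J).

Lemma mem_block i j : (i \in block j) =
  [&& i \in supp a, (key j <= key i)%N &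
      [forall j' in J, (key j < key j')%N ==> (key i < key j')%N]].
Proof.
rewrite inE preceqE; congr [&& _, _ & _].
by apply: eq_forallb => j'; rewrite !precE.
Qed.

Lemma mem_block0 i :
  (i \in block0) = (i \in supp a) && [forall j in J, (key i < key j)%N].
Proof. by rewrite inE; congr (_ && _); apply: eq_forallb => j; rewrite precE. Qed.

Lemma block_supp i j : i \in block j -> i \in supp a.
Proof. by rewrite mem_block => /and3P []. Qed.

Lemma key_le_block i j : i \in block j -> (key j <= key i)%N.
Proof. by rewrite mem_block => /and3P []. Qed.

Lemma mem_block_self j : j \in J -> j \in block j.
Proof.
move=> jJ; rewrite mem_block leqnn (subsetP J_supp _ jJ) /=.
by apply/forall_inP => j' _; apply/implyP.
Qed.

Lemma block_inj i j j' :
  j \in J -> j' \in J -> i \in block j -> i \in block j' -> j = j'.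
Proof.
move=> jJ j'J; rewrite !mem_block.
move=> /and3P [_ le_ji /forall_inP lt_j] /and3P [_ le_j'i /forall_inP lt_j'].
apply: key_inj; case: (ltngtP (key j) (key j')) => // [lt_jj'|lt_j'j].
  by have := implyP (lt_j _ j'J) lt_jj'; rewrite ltnNge le_j'i.
by have := implyP (lt_j' _ jJ) lt_j'j; rewrite ltnNge le_ji.
Qed.

Lemma block0_block i j : j \in J -> i \in block0 -> i \notin block j.
Proof.
move=> jJ; rewrite mem_block0 mem_block => /andP [_ /forall_inP lt_i].
by apply/and3P => -[_ le_ji _]; have := lt_i _ jJ; rewrite ltnNge le_ji.
Qed.

Lemma block_cover i :
  i \in supp a -> i \notin block0 -> exists2 j, j \in J & i \in block j.
Proof.
rewrite mem_block0 => iS; rewrite iS /= negb_forall_in => /exists_inP [j0 j0J].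
rewrite -leqNgt => le_j0i.
have [j /andP [jJ le_ji] max_j] := @arg_maxnP _ j0
  (fun j => (j \in J) && (key j <= key i)%N) key (introT andP (conj j0J le_j0i)).
exists j => //; rewrite mem_block iS le_ji /=.
apply/forall_inP => j' j'J; apply/implyP => lt_jj'; rewrite ltnNge; apply/negP => le_j'i.
have : (key j' <= key j)%N := max_j j' (introT andP (conj j'J le_j'i)).
by rewrite leqNgt lt_jj'.
Qed.

Local Notation sortedJ := (sortedJ p a J).

Lemma perm_sortedJ : perm_eq sortedJ (enum J).
Proof. by rewrite perm_sort. Qed.

Lemma sortedJ_uniq : uniq sortedJ.
Proof. by rewrite (perm_uniq perm_sortedJ) enum_uniq. Qed.

Lemma mem_sortedJ j : (j \in sortedJ) = (j \in J).
Proof. by rewrite (perm_mem perm_sortedJ) mem_enum. Qed.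

Lemma size_sortedJ : size sortedJ = #|J|.
Proof. by rewrite (perm_size perm_sortedJ) cardE. Qed.

Lemma restrict_blocks i :
  (restrict a block0 i + \sum_(j <- sortedJ) restrict a (block j) i)%N = a i.
Proof.
rewrite (perm_big _ perm_sortedJ) big_enum /= {1}/restrict.
have [iS | ] := boolP (i \in supp a); last first.
  rewrite inE negbK => /eqP ai0; rewrite big1 => [|j _]; rewrite /restrict ai0; by case: ifP.
have [i0 | i0] := boolP (i \in block0).
  by rewrite big1 ?addn0 // => j jJ; rewrite /restrict (negbTE (block0_block jJ i0)).
have [j0 j0J ij0] := block_cover iS i0.
rewrite add0n (bigD1 j0) //= big1 ?addn0 /restrict ?ij0 // => j /andP [jJ ne_jj0].
by case: ifP => // ij; rewrite (block_inj jJ j0J ij ij0) eqxx in ne_jj0.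
Qed.

Lemma block_subset j : block j \subset supp a.
Proof. by apply/subsetP => i /block_supp. Qed.

Lemma valw_block j : j \in J -> valw p (restrict a (block j)) = logn p (a j).
Proof.
move=> jJ; have jB := mem_block_self jJ.
have restrict_block i : i \in block j -> restrict a (block j) i = a i.
  by rewrite /restrict => ->.
rewrite (@valw_eq _ _ _ j) ?supp_restrict ?block_subset ?restrict_block //.
by move=> i iB; rewrite !restrict_block //; apply/logn_le_key/key_le_block.
Qed.

End Blocks.

End WeightOrder.

(** * Identities in the de Rham-Witt complex *)

Section DeRhamWittIdentities.
Variables (p n : nat) (A : pzRingType) (t : 'I_n -> A) (d F : A -> A).
Hypothesis hax : dRW_axioms p t d F.

Local Notation teichX := (teichX t).

Lemma comm_t x i : GRing.comm x (t i).
Proof. exact/esym/(dRW_t_central hax). Qed.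

Lemma comm_teichX x b : GRing.comm x (teichX b).
Proof. by apply: commr_prod => i _; apply/commrX/comm_t. Qed.

Lemma teichXD b c : teichX (fun i => b i + c i)%N = teichX b * teichX c.
Proof.
rewrite /Defs.teichX -prodrM_comm => [|i j _ _]; last exact/commr_sym/commrX/comm_t.
by apply: eq_bigr => i _; rewrite exprD.
Qed.

Lemma eq_teichX b c : b =1 c -> teichX b = teichX c.
Proof. by move=> eq_bc; apply: eq_bigr => i _; rewrite eq_bc. Qed.

Lemma teichX_sum (I : Type) (s : seq I) (f : I -> 'I_n -> nat) :
  \prod_(x <- s) teichX (f x) = teichX (fun k => \sum_(x <- s) f x k)%N.
Proof.
elim: s => [|x s IHs]; first by rewrite big_nil /Defs.teichX big1 // => i _; rewrite big_nil.
by rewrite big_cons IHs -teichXD; apply: eq_teichX => k; rewrite big_cons.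
Qed.

Lemma teichXM_texp b i e :
  teichX b * t i ^+ e = teichX (fun k => b k + e * (k == i))%N.
Proof.
rewrite teichXD; congr (_ * _).
rewrite /Defs.teichX (eq_bigr (fun k => if k == i then t k ^+ e else 1)).
  by rewrite -big_mkcond big_pred1_eq.
by move=> k _; case: eqP; rewrite ?muln1 ?muln0.
Qed.

Lemma prod_texp (s : seq 'I_n) e :
  \prod_(i <- s) t i ^+ e i = teichX (fun k => count_mem k s * e k)%N.
Proof.
elim: s => [|i s IHs]; first by rewrite big_nil /Defs.teichX big1.
rewrite big_cons IHs comm_teichX teichXM_texp; apply: eq_teichX => k /=.
by rewrite mulnDl addnC eq_sym; case: eqP => [->|]; rewrite ?mul1n ?muln1 ?muln0.
Qed.

Lemma d_texpM i m y :
  d (t i ^+ m * y) = (t i ^+ m.-1 * d (t i) * y) *+ m + t i ^+ m * d y.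
Proof.
elim: m => [|m IHm]; first by rewrite !expr0 !mul1r add0r.
rewrite exprS -mulrA (dRW_d_leibniz_t hax) IHm mulrDr mulrS -addrA; congr (_ + _).
  by rewrite mulrA (commrX m (comm_t _ i)).
rewrite mulrnAr !mulrA; congr (_ + _).
by case: m {IHm} => [|m]; rewrite ?mulr0n // -exprS.
Qed.

Lemma d_texp i m : d (t i ^+ m) = (t i ^+ m.-1 * d (t i)) *+ m.
Proof. by have := d_texpM i m 1; rewrite !mulr1 (dRW_d1 hax) mulr0 addr0. Qed.

Lemma d_prod_texpM (r : seq 'I_n) b y : uniq r ->
  d (\prod_(i <- r) t i ^+ b i * y) =
  \sum_(i <- r) (\prod_(k <- r) t k ^+ (b k - (k == i)) * d (t i) * y) *+ b i
  + \prod_(i <- r) t i ^+ b i * d y.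
Proof.
elim: r y => [|j r IHr] y /=; first by rewrite !big_nil !mul1r add0r.
case/andP=> j_r uniq_r.
have neq_j k : k \in r -> (k == j) = false by move=> kr; apply: contraNF j_r => /eqP <-.
rewrite !big_cons -mulrA d_texpM IHr // mulrDr addrA mulrA.
congr (_ + _); last by rewrite mulrA.
rewrite mulr_sumr eqxx subn1; congr (_ + _).
  under [in RHS]eq_big_seq => k kr do rewrite neq_j // subn0.
  rewrite -!mulrA [d (t j) * (_ * y)]mulrA.
  suff dt_comm : GRing.comm (d (t j)) (\prod_(k <- r) t k ^+ b k).
    by rewrite dt_comm -mulrA.
  by apply: commr_prod => k _; apply/commrX/comm_t.
apply: eq_big_seq => i ir; rewrite big_cons eq_sym neq_j // subn0.
by rewrite mulrnAr !mulrA.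
Qed.

Lemma d_teichX b :
  d (teichX b) = \sum_(i < n) (teichX (fun k => b k - (k == i))%N * d (t i)) *+ b i.
Proof.
have := d_prod_texpM b 1 (index_enum_uniq 'I_n).
rewrite !mulr1 (dRW_d1 hax) mulr0 addr0 /Defs.teichX => ->.
by apply: eq_bigr => i _; rewrite mulr1.
Qed.

Lemma iterF_is_zmod_morphism v : zmod_morphism (iter v F).
Proof.
have [_ [F_add _]] := dRW_F_rmorph hax.
have F_sub x y : F (x - y) = F x - F y.
  by apply: (addIr (F y)); rewrite -F_add !subrK.
by elim: v => [|v IHv] x y //=; rewrite IHv F_sub.
Qed.

Lemma iterF_is_monoid_morphism v : monoid_morphism (iter v F).
Proof.
have [F_mul [_ F1]] := dRW_F_rmorph hax.
by elim: v => [|v [IH1 IHM]] //; split => [|x y] /=; rewrite ?IH1 ?IHM.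
Qed.

Definition frob v : {rmorphism A -> A} :=
  HB.pack (iter v F)
    (GRing.isZmodMorphism.Build A A (iter v F) (iterF_is_zmod_morphism v))
    (GRing.isMonoidMorphism.Build A A (iter v F) (iterF_is_monoid_morphism v)).

Lemma frobE v x : frob v x = iter v F x. Proof. by []. Qed.

Lemma iterF_t v i : iter v F (t i) = t i ^+ (p ^ v).
Proof.
elim: v => [|v IHv] //; rewrite iterSr (dRW_F_t hax) -frobE rmorphXn frobE IHv.
by rewrite -exprM expnSr.
Qed.

Lemma iterF_teichX v b : iter v F (teichX b) = teichX (fun i => b i * p ^ v)%N.
Proof.
rewrite -frobE rmorph_prod; apply: eq_bigr => i _.
by rewrite rmorphXn frobE iterF_t -exprM mulnC.
Qed.

Hypothesis p_gt0 : (0 < p)%N.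

Lemma iterF_dt v i : iter v F (d (t i)) = t i ^+ (p ^ v).-1 * d (t i).
Proof.
elim: v => [|v IHv]; first by rewrite expr0 mul1r.
rewrite iterSr (dRW_F_dt hax) -frobE rmorphM rmorphXn !frobE iterF_t IHv mulrA.
by rewrite -exprM -exprD expnS [(p ^ v * _)%N]mulnC predn_mul // expn_gt0 p_gt0.
Qed.

Lemma iterF_d_texp v i m :
  iter v F (d (t i ^+ m)) = (t i ^+ (m * p ^ v).-1 * d (t i)) *+ m.
Proof.
rewrite d_texp -frobE rmorphMn rmorphM rmorphXn !frobE iterF_t iterF_dt.
case: m => [|m]; first by rewrite !mulr0n.
by rewrite mulrA -exprM -exprD predn_mul ?expn_gt0 ?p_gt0 // mulnC.
Qed.

Lemma iterF_d_teichX v c : (forall i, p ^ v %| c i)%N ->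
  iter v F (d (teichX (fun i => c i %/ p ^ v)%N)) =
  \sum_(i < n) (teichX (fun k => c k - (k == i))%N * d (t i)) *+ (c i %/ p ^ v).
Proof.
move=> dvd_c; rewrite d_teichX -frobE rmorph_sum; apply: eq_bigr => i _.
rewrite rmorphMn rmorphM !frobE iterF_teichX iterF_dt.
case c_i : (c i %/ p ^ v)%N => [|m]; first by rewrite !mulr0n.
rewrite mulrA teichXM_texp; congr (_ * _ *+ _); apply: eq_teichX => k.
have := divnK (dvd_c k); case: eqP => [->|_]; last by rewrite !muln0 !addn0 !subn0.
by rewrite c_i !muln1 !subn1 => <-; rewrite -predn_mul ?expn_gt0 ?p_gt0.
Qed.

(** * Expansion of h and e in the monomials omega *)

Section Expansion.
Variable a : 'I_n -> nat.

Local Notation key := (key p a).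
Local Notation key_weight := (key_weight p a).
Local Notation lg i := (logn p (a i)).

Definition omega (L : seq 'I_n) : A :=
  (\prod_(i <- L) (a i %/ p ^ lg i))%:R *
  (teichX (fun k => a k - count_mem k L)%N * \prod_(i <- L) d (t i)).

Lemma hfun_omega (I : {set 'I_n}) :
  I \subset supp a -> hfun p t d F a I = omega (enum I).
Proof.
move=> I_supp; rewrite /hfun /omega.
rewrite (eq_big_seq (fun j => (t j ^+ (a j).-1 * d (t j)) *+ (a j %/ p ^ lg j))); last first.
  by move=> j _; rewrite iterF_d_texp divnK // pfactor_dvdnn.
rewrite prodrMn prodrM_comm => [|i j _ _]; last exact/commr_sym/commrX/comm_t.
rewrite mulrnAr mulrA -mulr_natl mulrA [RHS]mulrA; congr (_ * _ * _).
have -> : \prod_(i in supp a :\: I) t i ^+ a i =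
    teichX (fun k => if k \in supp a :\: I then a k else 0)%N.
  by rewrite big_mkcond; apply: eq_bigr => k _; case: ifP.
rewrite prod_texp -teichXD; apply: eq_teichX => k.
rewrite count_uniq_mem ?enum_uniq // mem_enum in_setD.
case: (boolP (k \in I)) => kI /=; first by rewrite mul1n subn1.
case: ifP => kS; first by rewrite addn0 subn0.
by move: kS; rewrite inE => /negbFE /eqP ->.
Qed.

Section Blocks.
Variable J : {set 'I_n}.
Hypothesis J_supp : J \subset supp a.

Local Notation block := (block p a J).
Local Notation r := (sortedJ p a J).

Definition block_term (j i : 'I_n) : A :=
  (teichX (fun k => restrict a (block j) k - (k == i))%N * d (t i)) *+ (a i %/ p ^ lg j).

Lemma gfun_block j : j \in J ->
  gfun p t d F (restrict a (block j)) = \sum_(i <- enum (block j)) block_term j i.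
Proof.
move=> jJ; rewrite /gfun valw_block // iterF_d_teichX => [|i]; last first.
  rewrite /restrict; case: ifP => // iB; apply: dvdn_trans (pfactor_dvdnn p (a i)).
  by rewrite dvdn_exp2l // (logn_le_key (key_le_block iB)).
rewrite big_enum /= [RHS]big_mkcond /=; apply: eq_bigr => i _.
by rewrite /block_term /restrict; case: (i \in block j) => //; rewrite div0n mulr0n.
Qed.

Definition choice_coef (L : seq 'I_n) : nat :=
  \prod_(x <- zip r L) p ^ (lg x.2 - lg x.1).

Lemma mem_block_choices L :
  (L \in choices (fun j => enum (block j)) r) = all2 (fun j i => i \in block j) r L.
Proof.
rewrite mem_choices; apply/idP/idP; apply: sub_all2 => j i; by rewrite mem_enum.
Qed.

Lemma choice_coef_self : choice_coef r = 1%N.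
Proof.
by rewrite /choice_coef; elim: r => [|j s IHs]; rewrite ?big_nil //= big_cons subnn IHs.
Qed.

Section Choice.
Variable L : seq 'I_n.
Hypothesis L_choice : all2 (fun j i => i \in block j) r L.

Lemma size_choice : size r = size L.
Proof. by move: L_choice; rewrite all2E => /andP [/eqP]. Qed.

Lemma mem_zip_choice x : x \in zip r L -> x.2 \in block x.1.
Proof. by move: L_choice; rewrite all2E => /andP [_ /allP]; apply. Qed.

Lemma choice_uniq : uniq L.
Proof.
apply: all2_uniq L_choice; rewrite ?sortedJ_uniq // => j j' i.
by rewrite !mem_sortedJ; apply: block_inj.
Qed.

Lemma choice_supp : {subset L <= supp a}.
Proof. by move=> i /(all2_memr L_choice) [j _ /block_supp]. Qed.

Lemma key_weight_choice : L != r -> (key_weight r < key_weight L)%N.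
Proof.
rewrite eq_sym; apply: ltn_sum_all2; first exact: key_inj.
by apply: sub_all2 L_choice => j i /key_le_block.
Qed.

Lemma choice_exponent k :
  (restrict a (block0 p a J) k +
     \sum_(x <- zip r L) (restrict a (block x.1) k - (k == x.2)))%N =
  (a k - count_mem k L)%N.
Proof.
have le_delta x : x \in zip r L -> ((k == x.2) <= restrict a (block x.1) k)%N.
  move=> /mem_zip_choice xB; case: eqP => // ->; rewrite /restrict xB lt0n.
  by have := block_supp xB; rewrite inE.
have sum_fst : (\sum_(x <- zip r L) restrict a (block x.1) k =
                \sum_(j <- r) restrict a (block j) k)%N.
  by rewrite (big_zip_fst (fun j => restrict a (block j) k)) ?size_choice.
have sum_snd : (\sum_(x <- zip r L) (k == x.2) = count_mem k L)%N.
  rewrite (big_zip_snd (fun i => (k == i) : nat)) ?size_choice // -sum1_count.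
  by rewrite [RHS]big_mkcond; apply: eq_bigr => i _; rewrite eq_sym.
have le_sum : (count_mem k L <= \sum_(j <- r) restrict a (block j) k)%N.
  rewrite -sum_fst -sum_snd big_seq [X in (_ <= X)%N]big_seq.
  by apply: leq_sum => x /le_delta.
rewrite big_seq sumnB // -!big_seq sum_fst sum_snd.
have := restrict_blocks p a J k; lia.
Qed.

Lemma prod_coef_choice :
  (\prod_(x <- zip r L) (a x.2 %/ p ^ lg x.1) =
   \prod_(i <- L) (a i %/ p ^ lg i) * choice_coef L)%N.
Proof.
rewrite /choice_coef -(big_zip_snd (s := r) (fun i => a i %/ p ^ lg i)%N) ?size_choice //.
rewrite -big_split /=.
apply: eq_big_seq => x /mem_zip_choice xB.
by rewrite (divn_plogn p_gt0 (logn_le_key (key_le_block xB))).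
Qed.

Lemma choice_term :
  teichX (restrict a (block0 p a J)) * \prod_(x <- zip r L) block_term x.1 x.2 =
  omega L *+ choice_coef L.
Proof.
rewrite /block_term prodrMn prodrM_comm => [|x y _ _]; last exact/commr_sym/comm_teichX.
rewrite teichX_sum (big_zip_snd (fun i => d (t i))) ?size_choice //.
rewrite mulrnAr mulrA -teichXD prod_coef_choice /omega mulr_natl -mulrnA mulnC.
by congr (_ * _ *+ _); apply: eq_teichX => k; apply: choice_exponent.
Qed.

End Choice.

Lemma efun1_omega :
  efun p t d F 1 a J =
  \sum_(L <- choices (fun j => enum (block j)) r) omega L *+ choice_coef L.
Proof.
rewrite /efun mulr1z mul1r.
rewrite (eq_big_seq (fun j => \sum_(i <- enum (block j)) block_term j i)) => [|j]; last first.
  by rewrite mem_sortedJ => /gfun_block.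
rewrite prod_sum_choices mulr_sumr; apply: eq_big_seq => L.
by rewrite mem_block_choices => /choice_term.
Qed.

Lemma omega_sortedJ :
  omega r = efun p t d F 1 a J -
    \sum_(L <- choices (fun j => enum (block j)) r | L != r) omega L *+ choice_coef L.
Proof.
have r_choice : r \in choices (fun j => enum (block j)) r.
  by apply: self_mem_choices => j; rewrite mem_enum mem_sortedJ; apply: mem_block_self.
rewrite efun1_omega (bigD1_seq r) ?choices_uniq //= => [|j]; last exact: enum_uniq.
by rewrite choice_coef_self mulr1n addrK.
Qed.

End Blocks.

Lemma omega_perm L L' :
  perm_eq L L' -> exists k : nat, omega L = (-1) ^+ k * omega L'.
Proof.
move=> eq_LL'; have [k eq_dt] := prod_anticomm_perm (dRW_dt_anticomm hax) eq_LL'.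
exists k; rewrite /omega eq_dt.
have -> : (\prod_(i <- L) (a i %/ p ^ lg i) = \prod_(i <- L') (a i %/ p ^ lg i))%N.
  exact: perm_big.
rewrite (@eq_teichX _ (fun k => a k - count_mem k L')%N) => [|i].
  by rewrite !mulrA commr_sign !mulrA.
by rewrite (permP eq_LL').
Qed.

Definition efun_span (m : nat) (x : A) : Prop :=
  exists s : {set 'I_n} -> int, x = \sum_(J in partsOfSize a m) efun p t d F (s J) a J.

Lemma efunE s J : efun p t d F s a J = efun p t d F 1 a J *~ s.
Proof. by rewrite /efun -!mulrA !mulrzl mulr1z. Qed.

Lemma efun_span0 m : efun_span m 0.
Proof. by exists (fun=> 0); rewrite big1 // => J _; rewrite efunE mulr0z. Qed.

Lemma efun_spanD m x y : efun_span m x -> efun_span m y -> efun_span m (x + y).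
Proof.
move=> [s ->] [s' ->]; exists (fun J => s J + s' J); rewrite -big_split /=.
by apply: eq_bigr => J _; rewrite (efunE (s J)) (efunE (s' J)) (efunE (_ + _)) mulrzDr.
Qed.

Lemma efun_spanMz m x z : efun_span m x -> efun_span m (x *~ z).
Proof.
move=> [s ->]; exists (fun J => s J * z); rewrite mulrz_suml.
by apply: eq_bigr => J _; rewrite (efunE (s J)) (efunE (_ * _)) mulrzA.
Qed.

Lemma efun_span_efun1 m J :
  J \in partsOfSize a m -> efun_span m (efun p t d F 1 a J).
Proof.
move=> J_parts; exists (fun J' => (J' == J)%:Z).
rewrite (bigD1 J) //= eqxx big1 ?addr0 => [|J' /andP [_ /negbTE ->]]; last first.
  by rewrite efunE mulr0z.
by rewrite efunE mulr1z.
Qed.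

Lemma omega_in_span L :
  uniq L -> {subset L <= supp a} -> efun_span (size L) (omega L).
Proof.
have [N] := ubnP (size L * \max_(i : 'I_n) key i - key_weight L)%N.
elim: N L => // N IHN L lt_LN uniq_L L_supp.
set J := [set i in L]; set r := sortedJ p a J.
have J_supp : J \subset supp a by apply/subsetP => i; rewrite inE; apply: L_supp.
have card_J : #|J| = size L by rewrite cardsE (card_uniqP uniq_L).
have perm_Lr : perm_eq L r.
  by apply: uniq_perm; rewrite ?sortedJ_uniq // => i; rewrite mem_sortedJ inE.
have [k ->] := omega_perm perm_Lr; rewrite -intr_sign mulrzl; apply: efun_spanMz.
rewrite omega_sortedJ //; apply: efun_spanD.
  by apply: efun_span_efun1; rewrite inE J_supp card_J eqxx.
rewrite -mulrN1z; apply: efun_spanMz; rewrite big_seq_cond.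
elim/big_ind: _ => [|x y|L']; [exact: efun_span0 | exact: efun_spanD |].
rewrite mem_block_choices => /andP [L'_choice ne_L'r]; rewrite pmulrn; apply: efun_spanMz.
have size_L' : size L' = size L by rewrite -(size_choice L'_choice) size_sortedJ.
rewrite -size_L'; apply: IHN; [| exact: choice_uniq L'_choice | exact: choice_supp L'_choice].
have eq_w : key_weight L = key_weight r by apply: perm_big.
have := key_weight_choice L'_choice ne_L'r; have := key_weight_le p a L'.
by rewrite size_L' -/r; lia.
Qed.

End Expansion.

End DeRhamWittIdentities.

Unset Implicit Arguments.
Set Strict Implicit.

Theorem mainTheorem18 (p : nat) (hp : prime p) (n : nat) (A : pzRingType)
  (t : 'I_n -> A) (d : A -> A) (F : A -> A)
  (hax : dRW_axioms p t d F)
  (a : 'I_n -> nat) (I : {set 'I_n}) (hI : I \subset supp a) :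
  exists s : {set 'I_n} -> int,
    hfun p t d F a I =
    \sum_(J in partsOfSize a #|I|) efun p t d F (s J) a J.
Proof.
have p_gt0 := prime_gt0 hp.
rewrite (hfun_omega hax p_gt0 hI) cardE.
apply: omega_in_span => // [|i]; first exact: enum_uniq.
by rewrite mem_enum; apply: (subsetP hI).
Qed.
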